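(* Let $\nu$ be an antinorm on $\mathbb{R}^n$ and $U_\nu=\{\xi\in\mathbb{R}^n:\nu(\xi)\ge1\}$. Then (1) $U_\nu$ is a nonempty closed convex set; (2) $\lambda U_\nu\subset U_\nu$ for every $\lambda\ge1$; (3) $0\notin U_\nu$. Conversely, if $U\subset\mathbb{R}^n$ satisfies (1)–(3), then $\nu_U=\operatorname{cl}\mathring\nu_U$, where $\mathring\nu_U(\xi)=\sup\{\lambda>0:\xi\in\lambda U\}$ (with $\sup\varnothing=-\infty$), is an antinorm. Moreover, the maps $\nu\mapsto U_\nu$ and $U\mapsto\nu_U$ are mutually inverse: $\nu_{U_\nu}=\nu$ and $U_{\nu_U}=U$.
   Context: An antinorm on $\mathbb{R}^n$ is a function $\nu:\mathbb{R}^n\to\mathbb{R}\cup\{-\infty\}$ such that: $\nu$ is concave and closed (its hypograph is closed, i.e. $\nu$ is upper semicontinuous); $\nu(\lambda\xi)=\lambda\nu(\xi)$ for all $\lambda\ge0$, $\xi\in\mathbb{R}^n$; $\operatorname{dom}\nu=\{\xi:\nu(\xi)\neq-\infty\}\neq\varnothing$ and $\nu(\xi)>0$ for every $\xi$ in the relative interior of $\operatorname{dom}\nu$. For a concave function $g$, $\operatorname{cl}g$ denotes its closure, $(\operatorname{cl}g)(\xi)=\limsup_{\eta\to\xi}g(\eta)$. *)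

From mathcomp Require Import all_boot all_order all_algebra.
From mathcomp Require Import all_classical all_reals all_analysis.
Set Implicit Arguments. Unset Strict Implicit. Unset Printing Implicit Defensive.
Import Order.TTheory GRing.Theory Num.Theory.
Import numFieldNormedType.Exports.
Local Open Scope classical_set_scope.
Local Open Scope ring_scope.

Section Antinorm.
Variables (R : realType) (n : nat).
Local Notation V := 'rV[R]_n.

Definition hypo (nu : V -> \bar R) : set (V * R) :=
  [set p | (p.2%:E <= nu p.1)%E].

(* concave = hypograph is convex (written out) *)
Definition concave_fun (nu : V -> \bar R) : Prop :=
  forall (x y : V) (a b t : R), 0 <= t <= 1 ->
    (a%:E <= nu x)%E -> (b%:E <= nu y)%E ->
    ((t * a + (1 - t) * b)%:E <= nu (t *: x + (1 - t) *: y)%R)%E.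

Definition dom (nu : V -> \bar R) : set V := [set x | nu x != -oo%E].

Definition aff_hull (C : set V) : set V :=
  [set y | exists (k : nat) (p : 'I_k -> V) (w : 'I_k -> R),
     (forall i, C (p i)) /\ \sum_(i < k) w i = 1 /\
     y = \sum_(i < k) w i *: p i].

Definition rel_int (C : set V) : set V :=
  [set x | C x /\ exists2 e : R, 0 < e &
     forall y, aff_hull C y -> ball x e y -> C y].

Definition antinorm (nu : V -> \bar R) : Prop :=
  (forall x, nu x != +oo%E) /\
  [/\ concave_fun nu,
      closed (hypo nu),
      (forall (l : R) x, 0 <= l -> nu (l *: x)%R = (l%:E * nu x)%E),
      dom nu !=set0 &
      forall x, rel_int (dom nu) x -> (0 < nu x)%E].

Definition Uof (nu : V -> \bar R) : set V := [set x | (1 <= nu x)%E].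

(* the gauge-like function  sup {l > 0 : x \in l U},  sup of empty = -oo *)
Definition nu_ring (U : set V) (x : V) : \bar R :=
  ereal_sup [set l%:E | l in [set l : R | 0 < l /\ exists2 u, U u & x = l *: u]].

(* closure (upper semicontinuous hull): (cl g)(x) = limsup_{y -> x} g y *)
Definition clf (g : V -> \bar R) (x : V) : \bar R := limf_esup g (nbhs x).

Definition nuof (U : set V) : V -> \bar R := clf (nu_ring U).

Definition convex_setV (U : set V) : Prop :=
  convex_set (U : set (convex_lmodType V)).

Definition antinorm_set (U : set V) : Prop :=
  [/\ U !=set0, closed U, convex_setV U,
      (forall (l : R) u, 1 <= l -> U u -> U (l *: u)) & ~ U 0].

End Antinorm.

(* For an antinorm nu, the set U_nu = {nu >= 1} is closed because the hypograph
   is, convex because nu is concave, and stable under x |-> l x (l >= 1) by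
   homogeneity; moreover the gauge sup {l > 0 : x \in l U_nu} equals nu wherever
   nu > 0.  Points where nu <= 0 are limits of points t y0 + (1 - t) x with y0
   in the relative interior of the convex cone dom nu, where nu > 0, so the
   upper-semicontinuous closure of the gauge is nu itself.
   Conversely, for U satisfying (1)-(3) the gauge of U is positively homogeneous,
   concave by convexity of U and bounded by |x| / d, where d > 0 is the distance
   from 0 to U; its closure keeps these properties, is >= 1 on U, and is
   positive on the relative interior of its domain by concavity.  Its superlevel
   set {nu_U >= 1} is U because U is closed and stable under dilations. *)

From mathcomp Require Import all_boot all_order all_algebra.
From mathcomp Require Import all_classical all_reals all_analysis.
From mathcomp Require Import ring lra.
Import Order.TTheory GRing.Theory Num.Theory.
Import numFieldNormedType.Exports.
Set Implicit Arguments. Unset Strict Implicit.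
Local Open Scope classical_set_scope.
Local Open Scope ring_scope.

Lemma lee_fin_lt (R : realFieldType) (a b : \bar R) :
  (forall c : R, (c%:E < a)%E -> (c%:E <= b)%E) -> (a <= b)%E.
Proof.
case: a => [a| |] H; last by rewrite leNye.
- case: b H => [b| |] H; [|by rewrite leey|].
  + rewrite lee_fin; apply/ler_addgt0Pr => e e0.
    by rewrite -lerBlDr -lee_fin H // lte_fin ltrBlDr ltrDl.
  + by have := H (a - 1); rewrite lte_fin ltrBlDr ltrDl ltr01 leNgt ltNyr => /(_ isT).
- case: b H => [b| |] H; [|by []|].
  + by have := H (b + 1) (ltry _); rewrite lee_fin gerDl ler10.
  + by have := H 0 (ltry _); rewrite leNgt ltNyr.
Qed.

Lemma mx_norm_entry (R : realType) (m n : nat) (w : 'M[R]_(m, n)) i j :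
  `|w i j| <= `|w|.
Proof.
rewrite [`|w|]mx_normrE.
exact: (le_bigmax _ (fun ij : 'I_m * 'I_n => `|w ij.1 ij.2|) (i, j)).
Qed.

Lemma free_spanning_seq (F : fieldType) (vT : vectType F) (A : set vT) :
  exists X : seq vT,
    [/\ free X, forall v, v \in X -> A v & forall x, A x -> x \in <<X>>%VS].
Proof.
apply: contrapT => noX.
suff : forall k, exists X : seq vT, [/\ free X, forall v, v \in X -> A v & size X = k].
  move=> /(_ (\dim {:vT}).+1) [X [/eqP fX _ sX]].
  by have := dimvS (subvf <<X>>%VS); rewrite fX sX ltnn.
elim=> [|k [X [fX XA <-]]]; first by exists [::]; rewrite nil_free.
have /existsNP [x /not_implyP[Ax /negP xX]] : ~ forall x, A x -> x \in <<X>>%VS.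
  by move=> spanX; apply: noX; exists X.
exists (x :: X); split => //; first by rewrite free_cons xX fX.
by move=> v; rewrite in_cons => /orP[/eqP ->|/XA].
Qed.

Section RowSpace.
Variables (R : realType) (n : nat).
Local Notation V := 'rV[R]_n.

Lemma ballE (x y : V) e : ball x e y <-> `|x - y| < e.
Proof. by rewrite -ball_normE. Qed.

Lemma ball_conv (x y x' y' : V) e t : 0 <= t <= 1 ->
  ball x e x' -> ball y e y' ->
  ball (t *: x + (1 - t) *: y) e (t *: x' + (1 - t) *: y').
Proof.
move=> /andP[t0 t1]; rewrite !ballE => xx' yy'.
set m := Num.max `|x - x'| `|y - y'|.
have me : m < e by rewrite gt_max xx' yy'.
have h1 : t * `|x - x'| <= t * m by rewrite ler_wpM2l // le_max lexx.
have h2 : (1 - t) * `|y - y'| <= (1 - t) * m.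
  by rewrite ler_wpM2l ?subr_ge0 // le_max lexx orbT.
rewrite opprD addrACA -!scalerBr.
apply: le_lt_trans (ler_normD _ _) _.
rewrite !mx_normZ !ger0_norm ?subr_ge0 //; lra.
Qed.

Lemma small_multiple (v : V) e : 0 < e -> exists2 t : R, 0 < t <= 1 & `|t *: v| < e.
Proof.
move=> e0; have ve0 : 0 < `|v| + e by rewrite ltr_wpDl.
exists (e / (`|v| + e)).
  by rewrite divr_gt0 //= ler_pdivrMr // mul1r lerDr.
rewrite mx_normZ ger0_norm ?divr_ge0 ?ltW // mulrAC ltr_pdivrMr //.
by rewrite ltr_pM2l // ltrDl.
Qed.

Lemma closed_norm_lb (U : set V) : closed U -> ~ U 0 ->
  exists2 d : R, 0 < d & forall u, U u -> d <= `|u|.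
Proof.
move=> Ucl U0; apply: contrapT => noD; apply: U0; apply: Ucl.
move=> B /nbhs_ballP [e /= e0 eB].
have /existsNP [u /not_implyP [Uu /negP]] : ~ forall u, U u -> e <= `|u|.
  by move=> h; apply: noD; exists e.
by rewrite -ltNge => ue; exists u; split => //; apply: eB; rewrite ballE sub0r normrN.
Qed.

Lemma coord_norm_le (m : nat) (T : m.-tuple V) : exists2 C : R, 0 < C &
  forall i w, `|coord T i w| <= C * `|w|.
Proof.
set S := \sum_(i < m) \sum_(j < n) `|coord T i ('e_j : V)|.
have S0 : 0 <= S by apply: sumr_ge0 => i _; apply: sumr_ge0.
exists (1 + S); first by rewrite ltr_pwDl.
move=> i w.
have -> : coord T i w = \sum_(j < n) w 0 j * coord T i ('e_j : V).
  rewrite {1}(row_sum_delta w) linear_sum; apply: eq_bigr => j _.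
  by rewrite linearZ.
apply: le_trans (ler_norm_sum _ _ _) _.
apply: (@le_trans _ _ (\sum_(j < n) `|w| * `|coord T i ('e_j : V)|)).
  by apply: ler_sum => j _; rewrite normrM ler_wpM2r // mx_norm_entry.
rewrite -mulr_sumr mulrC ler_wpM2r // (@le_trans _ _ S) ?lerDr //.
by rewrite /S (bigD1 i) //= lerDl; apply: sumr_ge0 => k _; exact: sumr_ge0.
Qed.

Definition pos_homogeneous (g : V -> \bar R) :=
  forall (t : R) x, 0 < t -> g (t *: x) = (t%:E * g x)%E.

Lemma pos_homogeneousP (g : V -> \bar R) :
  (forall (t : R) x, 0 < t -> (g (t *: x) <= t%:E * g x)%E) -> pos_homogeneous g.
Proof.
move=> gle t x t0; have t_neq0 : t != 0 := lt0r_neq0 t0.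
apply/eqP; rewrite eq_le gle //=.
have := gle t^-1 (t *: x); rewrite invr_gt0 scalerA mulVf // scale1r => /(_ t0) gx.
apply: le_trans (lee_wpmul2l _ gx) _; first by rewrite lee_fin ltW.
by rewrite muleA -EFinM mulfV // mul1e.
Qed.

Section UpperClosure.
Variable g : V -> \bar R.

Lemma clf_ge x : (g x <= clf g x)%E.
Proof.
rewrite /clf limf_esupE; apply: le_ereal_inf_tmp => _ [A Ax <-].
by apply: ereal_sup_ubound; exists x => //; exact: nbhs_singleton.
Qed.

Lemma clf_le x (a : \bar R) e : 0 < e ->
  (forall y, ball x e y -> (g y <= a)%E) -> (clf g x <= a)%E.
Proof.
move=> e0 ga; rewrite /clf limf_esupE.
apply: (@le_trans _ _ (ereal_sup (g @` ball x e))).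
  by apply: ereal_inf_lbound; exists (ball x e) => //; exact: nbhsx_ballx.
by apply: ge_ereal_sup => _ [y xy <-]; apply: ga.
Qed.

Lemma clf_gt x (c : \bar R) : (c < clf g x)%E ->
  forall e, 0 < e -> exists2 y, ball x e y & (c < g y)%E.
Proof.
move=> cx e e0; apply: contrapT => noy; move: cx; apply/negP; rewrite -leNgt.
by apply: (clf_le e0) => y xy; rewrite leNgt; apply/negP => cy; apply: noy; exists y.
Qed.

Lemma le_clf x (a : \bar R) :
  (forall e, 0 < e -> forall c : R, (c%:E < a)%E ->
     exists2 y, ball x e y & (c%:E < g y)%E) ->
  (a <= clf g x)%E.
Proof.
move=> near_a; rewrite /clf limf_esupE; apply: le_ereal_inf_tmp => _ [A Ax <-].
move/nbhs_ballP: Ax => [e /= e0 eA].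
apply: lee_fin_lt => c ca; have [y xy cy] := near_a e e0 c ca.
by apply: (le_trans (ltW cy)); apply: ereal_sup_ubound; exists y => //; exact: eA.
Qed.

Lemma concave_clf : concave_fun g -> concave_fun (clf g).
Proof.
move=> gcv x y a b t t01 ha hb; apply: le_clf => e e0 c; rewrite lte_fin => ct.
set del := (t * a + (1 - t) * b - c) / 2.
have del0 : 0 < del by rewrite divr_gt0 // subr_gt0.
have [x' xx' hx'] : exists2 x', ball x e x' & ((a - del)%:E < g x')%E.
  by apply: clf_gt e0; apply: lt_le_trans ha; rewrite lte_fin ltrBlDr ltrDl.
have [y' yy' hy'] : exists2 y', ball y e y' & ((b - del)%:E < g y')%E.
  by apply: clf_gt e0; apply: lt_le_trans hb; rewrite lte_fin ltrBlDr ltrDl.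
exists (t *: x' + (1 - t) *: y'); first exact: ball_conv.
apply: lt_le_trans (gcv _ _ _ _ _ t01 (ltW hx') (ltW hy')).
by move/andP: t01 => [t0 t1]; rewrite lte_fin /del; lra.
Qed.

Lemma closed_hypo_clf : closed (hypo (clf g)).
Proof.
move=> [x a] cl_xa; rewrite /hypo /=; apply: le_clf => e e0 c; rewrite lte_fin => ca.
set del := Num.min (e / 2) ((a - c) / 2).
have del0 : 0 < del by rewrite lt_min !divr_gt0 // subr_gt0.
have [[x' a'] [hyp [xx' aa']]] := cl_xa _ (nbhsx_ballx (x, a) _ del0).
move: hyp xx' aa'; rewrite /hypo /= ballE -ball_normE /= => hyp xx' aa'.
have del_e : del <= e / 2 by rewrite ge_min lexx.
have del_a : del <= (a - c) / 2 by rewrite ge_min lexx orbT.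
have ca' : (c%:E < a'%:E)%E by rewrite lte_fin; have := ler_norm (a - a'); lra.
have [y x'y cy] := clf_gt (lt_le_trans ca' hyp) (divr_gt0 e0 (ltr0Sn _ 1)).
exists y => //; move: x'y; rewrite !ballE => x'y.
by have := ler_normD (x - x') (x' - y); rewrite addrA subrK; lra.
Qed.

Lemma clf_pos_homogeneous : pos_homogeneous g -> pos_homogeneous (clf g).
Proof.
move=> ghom; apply: pos_homogeneousP => t x t0; apply: lee_fin_lt => c ctx.
have t_neq0 : t != 0 := lt0r_neq0 t0.
suff cx : ((c / t)%:E <= clf g x)%E.
  have t0E : (0 <= t%:E)%E by rewrite lee_fin ltW.
  apply: le_trans (lee_wpmul2l t0E cx).
  by rewrite -EFinM mulrCA mulfV // mulr1.
apply: le_clf => e e0 c' c'c.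
have [y' txy' cy'] := clf_gt ctx (mulr_gt0 e0 t0).
exists (t^-1 *: y').
  move: txy'; rewrite !ballE.
  have -> : x - t^-1 *: y' = t^-1 *: (t *: x - y').
    by rewrite scalerBr scalerA mulVf // scale1r.
  by rewrite mx_normZ ger0_norm ?invr_ge0 ?ltW // ltr_pdivrMl // mulrC.
apply: lt_trans c'c _.
by rewrite ghom ?invr_gt0 // lte_pdivlMl // -EFinM mulrC divfK.
Qed.

End UpperClosure.

Section ConeRelativeInterior.
Variable K : set V.
Hypotheses (K0 : K 0) (KD : forall x y, K x -> K y -> K (x + y)).
Hypothesis KZ : forall (l : R) x, 0 <= l -> K x -> K (l *: x).

(* Take X free and spanning span K, and y the sum of X.  A vector of span K
   close to t y + (1 - t) x is (1 - t) x + \sum_i (t + c_i) X_i with |c_i| < t,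
   a nonnegative combination of points of K. *)
Lemma cone_relint_segment : exists y, forall x t, K x -> 0 < t <= 1 ->
  rel_int K (t *: y + (1 - t) *: x).
Proof.
have [X [_ XK KX]] := free_spanning_seq K.
have [C C0 coordC] := coord_norm_le (in_tuple X).
have XiK (i : 'I_(size X)) : K X`_i by apply/XK/mem_nth.
set y := \sum_(i < size X) X`_i.
have Ky : K y by apply: big_ind.
exists y => x t Kx /andP[t0 t1].
have t1' : 0 <= 1 - t by rewrite subr_ge0.
set z := t *: y + (1 - t) *: x.
have Kz : K z by apply: KD; apply: KZ => //; exact: ltW.
split => //; exists (t / C); first by rewrite divr_gt0.
move=> w [k [p [c [pK [_ wE]]]]] zw.
have wX : w \in <<X>>%VS.
  by rewrite wE; apply: memv_suml => i _; apply/memvZ/KX/pK.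
set d := w - z.
have dX : d \in <<X>>%VS by apply: memvB => //; exact: KX.
have wE' : w = (1 - t) *: x + \sum_(i < size X) (t + coord (in_tuple X) i d) *: X`_i.
  rewrite -[w](subrK z) -/d {1}(coord_span (X := in_tuple X) dX) /z.
  rewrite addrC (addrC (t *: y)) -addrA.
  congr (_ + _); rewrite /y scaler_sumr -big_split /=.
  by apply: eq_bigr => i _; rewrite scalerDl.
have dt : C * `|d| < t by rewrite mulrC -ltr_pdivlMr // -normrN opprB -ballE.
rewrite wE'; apply: KD; first exact: KZ.
apply: big_ind => // i _; apply: KZ => //.
by have := coordC i d; have := ler_norm (- coord (in_tuple X) i d); rewrite normrN; lra.
Qed.

End ConeRelativeInterior.

Lemma dom_of_ge (f : V -> \bar R) (a : R) x : (a%:E <= f x)%E -> dom f x.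
Proof. by move=> afx; rewrite /dom /= gt_eqF // (lt_le_trans _ afx) ?ltNyr. Qed.

Lemma closed_hypo_ge (f : V -> \bar R) x (c : R) : closed (hypo f) ->
  (forall e, 0 < e -> exists2 y, ball x e y & (c%:E <= f y)%E) -> (c%:E <= f x)%E.
Proof.
move=> fcl near_c; apply: (fcl (x, c)) => B /nbhs_ballP [e /= e0 eB].
have [y xy cy] := near_c e e0.
by exists (y, c); split => //; apply: eB; split; [exact: xy | exact: ballxx].
Qed.

(* Prolonging the segment from u through x slightly beyond x stays in dom f,
   so x = s z + (1 - s) u with 0 <= f z, whence f x >= (1 - s) a > 0. *)
Lemma concave_relint_gt0 (f : V -> \bar R) u x (a : R) : concave_fun f ->
  (forall z, dom f z -> (0 <= f z)%E) -> 0 < a -> (a%:E <= f u)%E ->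
  rel_int (dom f) x -> (0 < f x)%E.
Proof.
move=> fcv f0 a0 afu [domx [e e0 xe]].
have [t /andP[t0 _] txu] := small_multiple (x - u) e0.
set z := x + t *: (x - u).
have domz : dom f z.
  apply: xe; last by rewrite ballE opprD addrA subrr add0r normrN.
  exists 2, (fun i : 'I_2 => if i == ord0 then x else u),
    (fun i : 'I_2 => if i == ord0 then 1 + t else - t).
  split; first by move=> i; case: ifP => _ //; exact: dom_of_ge afu.
  rewrite !big_ord_recl !big_ord0 /= !addr0 addrK; split => //.
  by rewrite scalerDl scale1r scaleNr /z scalerBr addrA.
have t1 : 0 < 1 + t by rewrite addr_gt0.
set s := (1 + t)^-1.
have s01 : 0 <= s <= 1 by rewrite invr_ge0 ltW //= invf_le1 // lerDl ltW.
have <- : s *: z + (1 - s) *: u = x.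
  rewrite /z scalerDr scalerA.
  have -> : s * t = 1 - s by rewrite /s; field; rewrite lt0r_neq0.
  by rewrite scalerBr -addrA subrK -scalerDl addrC subrK scale1r.
apply: lt_le_trans (fcv _ _ _ _ _ s01 (f0 z domz) afu).
by rewrite lte_fin mulr0 add0r mulr_gt0 // subr_gt0 invf_lt1 // ltrDl.
Qed.

Section NuRing.
Variable U : set V.
Local Notation g := (nu_ring U).

Lemma nu_ring_ge u (l : R) : U u -> 0 < l -> (l%:E <= g (l *: u))%E.
Proof.
by move=> Uu l0; apply: ereal_sup_ubound; exists l => //; split => //; exists u.
Qed.

Lemma nu_ring_le_norm (d : R) : 0 < d -> (forall u, U u -> d <= `|u|) ->
  forall y, (g y <= (`|y| / d)%:E)%E.
Proof.
move=> d0 dU y; apply: ge_ereal_sup => _ [l [l0 [u Uu ->]] <-].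
by rewrite lee_fin mx_normZ ger0_norm ?(ltW l0) // ler_pdivlMr // ler_wpM2l ?(ltW l0) ?dU.
Qed.

Lemma nu_ring_gt0 y : (-oo < g y)%E -> (0 < g y)%E.
Proof.
move=> /ereal_sup_gt [_ [l [l0 [u Uu ->]] <-] _].
by apply: lt_le_trans (nu_ring_ge Uu l0); rewrite lte_fin.
Qed.

Lemma nu_ring_pos_homogeneous : pos_homogeneous g.
Proof.
apply: pos_homogeneousP => t y t0; apply: ge_ereal_sup => _ [l [l0 [u Uu tyE]] <-].
have t_neq0 := lt0r_neq0 t0.
have -> : l = t * (l / t) by rewrite mulrC divfK.
rewrite EFinM; apply: lee_wpmul2l; first by rewrite lee_fin ltW.
apply: ereal_sup_ubound; exists (l / t) => //; split; first exact: divr_gt0.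
by exists u => //; rewrite -[y](scalerK t_neq0) tyE scalerA mulrC.
Qed.

Lemma nu_ring_gt1 y : (forall (l : R) u, 1 <= l -> U u -> U (l *: u)) ->
  (1 < g y)%E -> U y.
Proof.
move=> UZ /ereal_sup_gt [_ [l [l0 [v Uv ->]] <-]]; rewrite lte_fin => l1.
by apply: UZ => //; exact: ltW.
Qed.

Lemma convex_cone_comb (u v : V) (l m t : R) : convex_setV U -> U u -> U v ->
  0 < l -> 0 < m -> 0 <= t <= 1 ->
  exists2 w, U w & t *: (l *: u) + (1 - t) *: (m *: v) = (t * l + (1 - t) * m) *: w.
Proof.
move=> Ucvx Uu Uv l0 m0 /andP[t0 t1]; set L := t * l + (1 - t) * m.
have L0 : 0 < L by rewrite /L; nra.
have p0 : 0 <= t * l / L by rewrite divr_ge0 ?mulr_ge0 // ltW.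
have p1 : t * l / L <= 1.
  by rewrite ler_pdivrMr // mul1r /L lerDl mulr_ge0 ?subr_ge0 // ltW.
have /set_mem /= Uw := Ucvx u v (Itv01 p0 p1) (mem_set Uu) (mem_set Uv).
exists (t * l / L *: u + (1 - t * l / L) *: v) => //.
rewrite scalerDr !scalerA; congr (_ *: _ + _ *: _); rewrite /L; field;
  exact: lt0r_neq0.
Qed.

Lemma concave_nu_ring : convex_setV U -> concave_fun g.
Proof.
move=> Ucvx x y a b t t01 ha hb; apply: lee_fin_lt => c; rewrite lte_fin => ct.
set del := t * a + (1 - t) * b - c.
have del0 : 0 < del by rewrite subr_gt0.
have /ereal_sup_gt [_ [l [l0 [u Uu ->]] <-]] : ((a - del)%:E < g x)%E.
  by apply: lt_le_trans ha; rewrite lte_fin ltrBlDr ltrDl.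
have /ereal_sup_gt [_ [m [m0 [v Uv ->]] <-]] : ((b - del)%:E < g y)%E.
  by apply: lt_le_trans hb; rewrite lte_fin ltrBlDr ltrDl.
rewrite !lte_fin => al bm.
have [w Uw ->] := convex_cone_comb Ucvx Uu Uv l0 m0 t01.
move/andP: t01 => [t0 t1].
have L0 : 0 < t * l + (1 - t) * m by nra.
apply: le_trans (nu_ring_ge Uw L0); rewrite lee_fin.
have h1 : t * (a - del) <= t * l by rewrite ler_wpM2l // ltW.
have h2 : (1 - t) * (b - del) <= (1 - t) * m by rewrite ler_wpM2l ?subr_ge0 // ltW.
by rewrite /del in h1 h2; lra.
Qed.

End NuRing.

Section NuOfSet.
Variable U : set V.
Hypotheses (U_ne : U !=set0) (Ucl : closed U) (Ucvx : convex_setV U).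
Hypotheses (UZ : forall (l : R) u, 1 <= l -> U u -> U (l *: u)) (U0 : ~ U 0).
Local Notation G := (nuof U).

Lemma nuof_ge1 u : U u -> (1 <= G u)%E.
Proof.
move=> Uu; apply: le_trans (clf_ge _ u).
by rewrite -[u in nu_ring U u]scale1r; exact: nu_ring_ge.
Qed.

Lemma concave_nuof : concave_fun G.
Proof. exact/concave_clf/concave_nu_ring. Qed.

Lemma nuof_fin x : G x != +oo%E.
Proof.
have [d d0 dU] := closed_norm_lb Ucl U0.
have : (G x <= ((`|x| + 1) / d)%:E)%E.
  apply: (clf_le ltr01) => y; rewrite ballE => xy.
  apply: le_trans (nu_ring_le_norm d0 dU y) _; rewrite lee_fin ler_pM2r ?invr_gt0 //.
  by have := ler_distD x y 0; rewrite !subr0 distrC; lra.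
by move=> Gx; rewrite lt_eqF // (le_lt_trans Gx) ?ltry.
Qed.

Lemma nuof_ge0 z : dom G z -> (0 <= G z)%E.
Proof.
rewrite /dom /= -ltNye => /clf_gt Gz; apply: le_clf => e e0 c; rewrite lte_fin => c0.
have [y zy gy] := Gz e e0.
by exists y => //; apply: lt_trans (nu_ring_gt0 gy); rewrite lte_fin.
Qed.

Lemma nuof0 : G 0 = 0%E.
Proof.
have [d d0 dU] := closed_norm_lb Ucl U0; have [u Uu] := U_ne.
apply/eqP; rewrite eq_le; apply/andP; split.
  apply/lee_addgt0Pr => e e0; rewrite add0e.
  apply: (clf_le (mulr_gt0 e0 d0)) => y; rewrite ballE sub0r normrN => ye.
  apply: le_trans (nu_ring_le_norm d0 dU y) _.
  by rewrite lee_fin ler_pdivrMr // ltW.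
apply: le_clf => e e0 c; rewrite lte_fin => c0.
have [s /andP[s0 _] su] := small_multiple u e0.
exists (s *: u); first by rewrite ballE sub0r normrN.
by apply: lt_le_trans (nu_ring_ge Uu s0); rewrite lte_fin (lt_trans c0).
Qed.

Lemma nuofZ (l : R) x : 0 <= l -> G (l *: x) = (l%:E * G x)%E.
Proof.
rewrite le_eqVlt => /predU1P[<-|l0]; first by rewrite scale0r nuof0 mul0e.
exact: clf_pos_homogeneous (@nu_ring_pos_homogeneous U) _ _ l0.
Qed.

(* If G x >= 1, then G ((1 + eps) x) > 1, so points y close to (1 + eps) x,
   hence close to x, have nu_ring U y > 1 and lie in U. *)
Lemma Uof_nuof : Uof G = U.
Proof.
apply/seteqP; split => x; last exact: nuof_ge1.
rewrite /Uof /= => Gx; apply: Ucl => B /nbhs_ballP [e /= e0 eB].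
have e2 : 0 < e / 2 by rewrite divr_gt0.
have [eps /andP[eps0 _] epsx] := small_multiple x e2.
have : (1 < G ((1 + eps) *: x))%E.
  rewrite nuofZ ?addr_ge0 ?(ltW eps0) //; apply: (@lt_le_trans _ _ (1 + eps)%:E).
    by rewrite lte_fin ltrDl.
  by apply: lee_pemulr; rewrite // lee_fin addr_ge0 ?(ltW eps0).
move/clf_gt/(_ _ e2) => [y xy /(nu_ring_gt1 UZ) Uy].
exists y; split => //; apply: eB; move: xy; rewrite !ballE => xy.
have -> : x - y = ((1 + eps) *: x - y) - eps *: x.
  by rewrite scalerDl scale1r addrAC addrK.
by apply: le_lt_trans (ler_normB _ _) _; lra.
Qed.

Lemma nuof_relint_gt0 x : rel_int (dom G) x -> (0 < G x)%E.
Proof.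
have [u Uu] := U_ne.
exact: concave_relint_gt0 concave_nuof nuof_ge0 ltr01 (nuof_ge1 Uu).
Qed.

End NuOfSet.

Lemma antinorm_nuof (U : set V) : antinorm_set U ->
  antinorm (nuof U) /\ Uof (nuof U) = U.
Proof.
case=> U_ne Ucl Ucvx UZ U0; split; last exact: Uof_nuof.
have [u Uu] := U_ne.
split; first exact: nuof_fin; split.
- exact: concave_nuof.
- exact: closed_hypo_clf.
- exact: nuofZ.
- by exists u; apply: dom_of_ge (nuof_ge1 Uu).
- exact: nuof_relint_gt0.
Qed.

Section UofAntinorm.
Variable nu : V -> \bar R.
Hypotheses (nu_fin : forall x, nu x != +oo%E) (nu_cv : concave_fun nu).
Hypotheses (nu_cl : closed (hypo nu)) (dom_ne : dom nu !=set0).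
Hypothesis nuZ : forall (l : R) x, 0 <= l -> nu (l *: x) = (l%:E * nu x)%E.
Hypothesis nu_relint : forall x, rel_int (dom nu) x -> (0 < nu x)%E.

Lemma antinorm0 : nu 0 = 0%E.
Proof. by have [x _] := dom_ne; rewrite -(scale0r x) nuZ // mul0e. Qed.

Lemma antinorm_dom0 : dom nu 0.
Proof. by rewrite /dom /= antinorm0. Qed.

Lemma antinorm_fineK x : dom nu x -> (fine (nu x))%:E = nu x.
Proof. by move=> domx; rewrite fineK // fin_numE domx nu_fin. Qed.

Lemma antinorm_domZ (l : R) x : 0 <= l -> dom nu x -> dom nu (l *: x).
Proof.
move=> l0 domx.
by rewrite /dom /= nuZ // -(antinorm_fineK domx) -EFinM gt_eqF ?ltNyr.
Qed.

Lemma antinorm_domD x y : dom nu x -> dom nu y -> dom nu (x + y).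
Proof.
move=> domx domy; have half01 : 0 <= (2^-1 : R) <= 1.
  by rewrite invr_ge0 ler0n invf_le1 ?ler1n.
have fx : ((fine (nu x))%:E <= nu x)%E by rewrite antinorm_fineK.
have fy : ((fine (nu y))%:E <= nu y)%E by rewrite antinorm_fineK.
have /dom_of_ge := nu_cv half01 fx fy.
have -> : 1 - 2^-1 = 2^-1 :> R by field.
by rewrite -scalerDr => /(antinorm_domZ (ler0n _ 2)); rewrite scalerA mulfV // scale1r.
Qed.

Lemma antinorm_gt0_fin z : (0 < nu z)%E -> exists2 r : R, 0 < r & nu z = r%:E.
Proof.
move=> z0; have domz := dom_of_ge (ltW z0).
by exists (fine (nu z)); rewrite ?antinorm_fineK // -lte_fin antinorm_fineK.
Qed.

Lemma antinorm_scale_inv z (r : R) : 0 < r -> nu z = r%:E -> nu (r^-1 *: z) = 1%E.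
Proof.
by move=> r0 zr; rewrite nuZ ?invr_ge0 ?(ltW r0) // zr -EFinM mulVf ?lt0r_neq0.
Qed.

Lemma antinorm_segment_gt0 : exists y0, forall x t, dom nu x -> 0 < t <= 1 ->
  (0 < nu (t *: y0 + (1 - t) *: x))%E.
Proof.
have [y0 y0rel] := cone_relint_segment antinorm_dom0 antinorm_domD antinorm_domZ.
by exists y0 => x t domx t01; apply/nu_relint/y0rel.
Qed.

Lemma antinorm_set_Uof : antinorm_set (Uof nu).
Proof.
split.
- have [y0 /(_ 0 1 antinorm_dom0)] := antinorm_segment_gt0.
  rewrite ltr01 lexx subrr scale0r addr0 scale1r => /(_ isT) /antinorm_gt0_fin[r r0 y0r].
  by exists (r^-1 *: y0); rewrite /Uof /= (antinorm_scale_inv r0 y0r).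
- move=> x clx; apply: closed_hypo_ge nu_cl _ => e e0.
  by have [y [Uy xy]] := clx _ (nbhsx_ballx x _ e0); exists y.
- move=> x y l /set_mem x1 /set_mem y1; apply/mem_set.
  have l01 : 0 <= l%:num <= 1 by rewrite ge0 le1.
  by have := nu_cv l01 x1 y1; rewrite !mulr1 subrKC.
- move=> l u l1 u1; rewrite /Uof /= nuZ ?(le_trans ler01) //.
  by apply: (le_trans u1); apply: lee_pemull => //; exact: le_trans lee01 u1.
- by rewrite /Uof /= antinorm0 lee_fin ler10.
Qed.

Local Notation g := (nu_ring (Uof nu)).

Lemma nu_ring_Uof_le z : (g z <= nu z)%E.
Proof.
apply: ge_ereal_sup => _ [l [l0 [u u1 ->]] <-].
by rewrite nuZ ?(ltW l0) //; apply: lee_pemulr; rewrite // lee_fin ltW.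
Qed.

Lemma nu_ring_Uof_gt0 z : (0 < nu z)%E -> g z = nu z.
Proof.
move=> z0; apply/eqP; rewrite eq_le nu_ring_Uof_le /=.
have [r r0 zr] := antinorm_gt0_fin z0.
rewrite zr -[z in g z](scalerKV (lt0r_neq0 r0)); apply: nu_ring_ge => //.
by rewrite /Uof /= (antinorm_scale_inv r0 zr).
Qed.

Lemma nuof_Uof_le x : (nuof (Uof nu) x <= nu x)%E.
Proof.
apply: lee_fin_lt => c cx; apply: closed_hypo_ge nu_cl _ => e e0.
have [y xy cy] := clf_gt cx e0.
by exists y => //; apply/ltW/(lt_le_trans cy)/nu_ring_Uof_le.
Qed.

Lemma nu_le_nuof_Uof x : (nu x <= nuof (Uof nu) x)%E.
Proof.
have [->|domx] := eqVneq (nu x) -oo%E; first exact: leNye.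
have [x0|x0] := ltP 0%E (nu x); first by rewrite -nu_ring_Uof_gt0 //; exact: clf_ge.
apply: le_clf => e e0 c cx.
have [y0 y0pos] := antinorm_segment_gt0.
have [t t01 txy] := small_multiple (x - y0) e0.
exists (t *: y0 + (1 - t) *: x).
  rewrite ballE; suff -> : x - (t *: y0 + (1 - t) *: x) = t *: (x - y0) by [].
  by rewrite scalerBl scale1r scalerBr opprD addrA opprB addrC addrA subrK.
have y0x_pos := y0pos x t domx t01.
by rewrite nu_ring_Uof_gt0 // (lt_le_trans cx) // (le_trans x0) ?ltW.
Qed.

End UofAntinorm.

Lemma antinorm_Uof (nu : V -> \bar R) : antinorm nu ->
  antinorm_set (Uof nu) /\ nuof (Uof nu) = nu.
Proof.
case=> nu_fin [nu_cv nu_cl nuZ dom_ne nu_relint]; split.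
  exact: antinorm_set_Uof.
apply/funext => x; apply/eqP; rewrite eq_le nuof_Uof_le //=.
exact: nu_le_nuof_Uof.
Qed.

End RowSpace.

Theorem lemma1 (R : realType) (n : nat) :
  (forall nu : 'rV[R]_n -> \bar R, antinorm nu ->
     antinorm_set (Uof nu) /\ nuof (Uof nu) = nu) /\
  (forall U : set 'rV[R]_n, antinorm_set U ->
     antinorm (nuof U) /\ Uof (nuof U) = U).
Proof. by split; [exact: antinorm_Uof | exact: antinorm_nuof]. Qed.
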